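(* There exists a RobMCF instance on an acyclic digraph with two scenarios $\Lambda=\{1,2\}$, a unique source $s$ and a unique sink $t$, with $b^1(s)<b^2(s)$, and an optimal robust $\boldsymbol b$-flow $\boldsymbol f=(f^1,f^2)$ such that $c(f^2)<c(f^1)=c(\boldsymbol f)$; i.e., the cost of an optimal robust flow is not necessarily attained by the scenario flow sending the maximum demand.
   Context: A RobMCF instance $(G,u,c,\boldsymbol b)$ consists of a finite directed graph (parallel arcs allowed) $G=(V,A)$ whose arc set is partitioned as $A=A^{\mathrm{fix}}\cup A^{\mathrm{free}}$ into fixed and free arcs, capacities $u:A\to\mathbb Z_{\ge0}$, costs $c:A\to\mathbb Z_{\ge0}$, a finite nonempty set of scenarios $\Lambda$, and for each $\lambda\in\Lambda$ balances $b^\lambda:V\to\mathbb Z$ with $\sum_{v\in V}b^\lambda(v)=0$; $\boldsymbol b=(b^\lambda)_{\lambda\in\Lambda}$. A $b^\lambda$-flow is a function $f^\lambda:A\to\mathbb Z_{\ge0}$ with $f^\lambda(a)\le u(a)$ for all $a\in A$ and $\sum_{a=(v,w)\in A}f^\lambda(a)-\sum_{a=(w,v)\in A}f^\lambda(a)=b^\lambda(v)$ for all $v\in V$ (outflow minus inflow); its cost is $c(f^\lambda)=\sum_{a\in A}c(a)f^\lambda(a)$. A robust $\boldsymbol b$-flow is a tuple $\boldsymbol f=(f^\lambda)_{\lambda\in\Lambda}$ of $b^\lambda$-flows with $f^\lambda(a)=f^{\lambda'}(a)$ for all $a\in A^{\mathrm{fix}}$ and all $\lambda,\lambda'\in\Lambda$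 (consistent flow constraints); its cost is $c(\boldsymbol f)=\max_{\lambda\in\Lambda}c(f^\lambda)$. An optimal robust $\boldsymbol b$-flow is one of minimum cost. A vertex $v$ is a source (sink) in scenario $\lambda$ if $b^\lambda(v)>0$ ($b^\lambda(v)<0$). The instance has a unique source $s$ (unique sink $t$) if in every scenario $s$ is the only source ($t$ is the only sink). *)

From mathcomp Require Import all_boot all_order all_algebra.
Set Implicit Arguments. Unset Strict Implicit. Unset Printing Implicit Defensive.
Import Order.TTheory GRing.Theory Num.Theory.

Record digraph := Digraph {
  dV : finType;
  dA : finType;
  tail : dA -> dV;
  head : dA -> dV }.

Definition is_walk (G : digraph) (p : seq (dA G)) : bool :=
  match p with
  | [::] => true
  | a :: q => path (fun x y => head x == tail y) a q
  end.

Definition acyclic (G : digraph) : Prop :=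
  forall (a : dA G) (q : seq (dA G)),
    is_walk (a :: q) -> head (last a q) <> tail a.

Record robmcf (L : finType) := RobMCF {
  graph : digraph;
  fixed : pred (dA graph);           (* A^fix; A^free is its complement *)
  cap : dA graph -> nat;
  cost : dA graph -> nat;
  bal : L -> dV graph -> int }.
Arguments graph {L}. Arguments fixed {L}. Arguments cap {L}.
Arguments cost {L}. Arguments bal {L}.

Definition balanced {L : finType} (I : robmcf L) : Prop :=
  forall l : L, (\sum_(v : dV (graph I)) bal I l v = 0)%R.

Definition is_bflow {L : finType} {I : robmcf L} (l : L)
    (f : dA (graph I) -> nat) : Prop :=
  (forall a, f a <= cap I a) /\
  (forall v : dV (graph I),
     ((\sum_(a | tail a == v) (f a)%:Z) - (\sum_(a | head a == v) (f a)%:Z))%R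
       = bal I l v).

Definition flow_cost {L : finType} {I : robmcf L} (f : dA (graph I) -> nat) : nat :=
  \sum_(a : dA (graph I)) cost I a * f a.

Definition is_robust_flow {L : finType} {I : robmcf L}
    (f : L -> dA (graph I) -> nat) : Prop :=
  (forall l, is_bflow l (f l)) /\
  (forall a l l', fixed I a -> f l a = f l' a).

Definition robust_cost {L : finType} {I : robmcf L}
    (f : L -> dA (graph I) -> nat) : nat :=
  \max_(l : L) flow_cost (f l).

Definition optimal_robust_flow {L : finType} {I : robmcf L}
    (f : L -> dA (graph I) -> nat) : Prop :=
  is_robust_flow f /\
  forall g : L -> dA (graph I) -> nat, is_robust_flow g -> robust_cost f <= robust_cost g.

Definition is_source {L : finType} (I : robmcf L) (l : L) (v : dV (graph I)) :=
  (0 < bal I l v)%R.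
Definition is_sink {L : finType} (I : robmcf L) (l : L) (v : dV (graph I)) :=
  (bal I l v < 0)%R.

Definition unique_source {L : finType} (I : robmcf L) (s : dV (graph I)) : Prop :=
  forall l v, @is_source L I l v <-> v = s.
Definition unique_sink {L : finType} (I : robmcf L) (t : dV (graph I)) : Prop :=
  forall l v, @is_sink L I l v <-> v = t.

From Pilot Require Import Defs.
From mathcomp Require Import all_boot all_order all_algebra zify.
Import Order.TTheory GRing.Theory Num.Theory.

Set Implicit Arguments.
Unset Strict Implicit.
Unset Printing Implicit Defensive.

(* The theorem is an existence statement; we prove it with an explicit
   instance on the four vertices s, x, y, t with five unit-capacity arcs
       s->x (fixed),  y->t (fixed),  x->t,  s->y,  x->y (cost 10),
   all other arcs being free of charge.  Scenario 1 ships one unit from s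
   to t, scenario 2 ships two.
   In scenario 2 both arcs leaving s and both arcs entering t must be
   saturated; by consistency the fixed arcs s->x and y->t then carry one unit
   in scenario 1 as well.  The single unit of scenario 1 therefore has to
   travel s->x->y->t and pay 10 on x->y, while scenario 2 routes
   s->x->t and s->y->t for free.  So every robust flow costs at least 10, the
   flow just described costs exactly 10, and its maximum is attained by the
   scenario with the SMALLER demand. *)

Lemma rank_increases_along_walk (G : digraph) (rank : dV G -> nat) :
  (forall a, rank (tail a) < rank (Defs.head a)) ->
  forall a q, is_walk (a :: q) -> rank (tail a) < rank (Defs.head (last a q)).
Proof.
move=> rank_up a q; elim: q a => [|b q IHq] a /=; first by rewrite rank_up.
case/andP=> /eqP head_a_tail_b walk_bq.
by apply: ltn_trans (rank_up a) _; rewrite head_a_tail_b; apply: IHq.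
Qed.

Lemma acyclic_of_rank (G : digraph) (rank : dV G -> nat) :
  (forall a, rank (tail a) < rank (Defs.head a)) -> acyclic G.
Proof.
move=> rank_up a q walk_aq closed_aq.
by have := rank_increases_along_walk rank_up walk_aq; rewrite closed_aq ltnn.
Qed.

Lemma robust_cost_attained (L : finType) (I : robmcf L)
    (f : L -> dA (graph I) -> nat) (l0 : L) :
  (forall l, flow_cost (f l) <= flow_cost (f l0)) ->
  robust_cost f = flow_cost (f l0).
Proof.
move=> l0_max; apply/eqP; rewrite eqn_leq (leq_bigmax l0) andbT.
by apply/bigmax_leqP => l _; apply: l0_max.
Qed.

Local Open Scope ring_scope.

Definition vs : 'I_4 := @Ordinal 4 0 isT.
Definition vx : 'I_4 := @Ordinal 4 1 isT.
Definition vy : 'I_4 := @Ordinal 4 2 isT.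
Definition vt : 'I_4 := @Ordinal 4 3 isT.

(* The arcs, named by their endpoints; the two fixed ones come first. *)
Definition a_sx : 'I_5 := @Ordinal 5 0 isT.
Definition a_yt : 'I_5 := @Ordinal 5 1 isT.
Definition a_xt : 'I_5 := @Ordinal 5 2 isT.
Definition a_sy : 'I_5 := @Ordinal 5 3 isT.
Definition a_xy : 'I_5 := @Ordinal 5 4 isT.

Definition arc_tail (a : 'I_5) : 'I_4 := nth vs [:: vs; vy; vx; vs; vx] a.
Definition arc_head (a : 'I_5) : 'I_4 := nth vs [:: vx; vt; vt; vy; vy] a.

Definition example_graph : digraph := Digraph arc_tail arc_head.

Definition example_bal (l : 'I_2) (v : 'I_4) : int :=
  if v == vs then (val l).+1%:Z else if v == vt then - (val l).+1%:Z else 0.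

Definition example : robmcf 'I_2 :=
  @RobMCF _ example_graph (fun a : 'I_5 => (val a <= 1)%N) (fun _ => 1%N)
    (fun a : 'I_5 => if a == a_xy then 10%N else 0%N) example_bal.

Lemma ord2P (l : 'I_2) : l = ord0 \/ l = ord_max.
Proof. by case: l => [[|[|//]] ?]; [left | right]; apply: val_inj. Qed.

Lemma vertexP (v : 'I_4) : [\/ v = vs, v = vx, v = vy | v = vt].
Proof.
by case: v => [[|[|[|[|//]]]] ?]; [constructor 1|constructor 2|constructor 3|
  constructor 4]; apply: val_inj.
Qed.

Lemma arcP (a : 'I_5) :
  a = a_sx \/ a = a_yt \/ a = a_xt \/ a = a_sy \/ a = a_xy.
Proof.
by case: a => [[|[|[|[|[|//]]]]] ?]; [left|right; left|do 2 right; left|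
  do 3 right; left|do 4 right]; apply: val_inj.
Qed.

Lemma big_arcs (R : Type) (idx : R) (op : Monoid.law idx) (F : 'I_5 -> R) :
  \big[op/idx]_a F a =
  op (op (op (op (F a_sx) (F a_yt)) (F a_xt)) (F a_sy)) (F a_xy).
Proof.
rewrite !big_ord_recr big_ord0 /= Monoid.mul1m.
by congr (op (op (op (op (F _) (F _)) (F _)) (F _)) (F _)); apply: val_inj.
Qed.

Definition net_outflow (g : 'I_5 -> nat) (v : 'I_4) : int :=
  (\sum_(a | arc_tail a == v) (g a)%:Z) - (\sum_(a | arc_head a == v) (g a)%:Z).

Lemma net_outflowE (g : 'I_5 -> nat) :
  [/\ net_outflow g vs = (g a_sx)%:Z + (g a_sy)%:Z,
      net_outflow g vx = (g a_xt)%:Z + (g a_xy)%:Z - (g a_sx)%:Z,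
      net_outflow g vy = (g a_yt)%:Z - (g a_sy)%:Z - (g a_xy)%:Z &
      net_outflow g vt = - ((g a_yt)%:Z + (g a_xt)%:Z)].
Proof.
by split; rewrite /net_outflow big_mkcond big_arcs big_mkcond big_arcs /=; lia.
Qed.

Lemma example_acyclic : acyclic (graph example).
Proof.
(* Numbering s, x, y, t as 0, 1, 2, 3 is a topological order. *)
apply: (@acyclic_of_rank example_graph (fun v : 'I_4 => val v)) => a.
by case: (arcP a) => [|[|[|[|]]]] ->.
Qed.

Lemma bflow_conservation (l : 'I_2) (g : 'I_5 -> nat) :
  @is_bflow _ example l g -> forall v, net_outflow g v = example_bal l v.
Proof. by case. Qed.

(* Two units must leave s and enter t in scenario 2, which saturates the
   fixed arcs s->x and y->t; consistency carries this over to scenario 1,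
   whose single unit is then forced through the expensive arc x->y. *)
Lemma robust_flow_uses_detour (g : 'I_2 -> 'I_5 -> nat) :
  @is_robust_flow _ example g -> g ord0 a_xy = 1%N.
Proof.
case=> bflow consistent.
have cap1 := (bflow ord0).1; have cap2 := (bflow ord_max).1.
have cons1 := bflow_conservation (bflow ord0).
have cons2 := bflow_conservation (bflow ord_max).
case: (net_outflowE (g ord_max)) => out2_s _ _ out2_t.
case: (net_outflowE (g ord0)) => out1_s _ out1_y _.
have demand2_s := cons2 vs; rewrite out2_s /example_bal /= in demand2_s.
have demand2_t := cons2 vt; rewrite out2_t /example_bal /= in demand2_t.
have demand1_s := cons1 vs; rewrite out1_s /example_bal /= in demand1_s.
have balance1_y := cons1 vy; rewrite out1_y /example_bal /= in balance1_y.
have same_sx := consistent a_sx ord0 ord_max isT.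
have same_yt := consistent a_yt ord0 ord_max isT.
have := cap2 a_sx; have := cap2 a_sy; have := cap2 a_yt; have := cap2 a_xt.
have := cap1 a_sy; rewrite /=; lia.
Qed.

Lemma robust_cost_lower_bound (g : 'I_2 -> 'I_5 -> nat) :
  @is_robust_flow _ example g -> (10 <= @robust_cost _ example g)%N.
Proof.
move=> robust_g; apply: leq_trans (leq_bigmax ord0).
by rewrite /flow_cost (bigD1 a_xy) //= robust_flow_uses_detour // leq_addr.
Qed.

Lemma example_balanced : balanced example.
Proof.
by move=> l; rewrite /= !big_ord_recr big_ord0 /=; case: (ord2P l) => ->.
Qed.

Lemma example_unique_source : unique_source (vs : dV (graph example)).
Proof.
by move=> l v; rewrite /is_source /=; case: (ord2P l) => ->;
  case: (vertexP v) => ->.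
Qed.

Lemma example_unique_sink : unique_sink (vt : dV (graph example)).
Proof.
by move=> l v; rewrite /is_sink /=; case: (ord2P l) => ->;
  case: (vertexP v) => ->.
Qed.

(* The witness: scenario 1 sends its unit along s->x->y->t, scenario 2
   sends one unit along s->x->t and one along s->y->t. *)
Definition witness (l : 'I_2) (a : 'I_5) : nat :=
  if l == ord0 then a \in [:: a_sx; a_xy; a_yt] else a != a_xy.

Lemma witness_robust : @is_robust_flow _ example witness.
Proof.
split; last by move=> a l l'; case: (arcP a) => [|[|[|[|]]]] -> //= _;
  case: (ord2P l) => ->; case: (ord2P l') => ->.
move=> l; split; first by move=> a; case: (ord2P l) => ->;
  case: (arcP a) => [|[|[|[|]]]] ->.
move=> v; rewrite -/(net_outflow _ _).
case: (net_outflowE (witness l)) => out_s out_x out_y out_t.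
by case: (vertexP v) => ->; rewrite ?(out_s, out_x, out_y, out_t);
  case: (ord2P l) => ->.
Qed.

Lemma witness_costs :
  @flow_cost _ example (witness ord0) = 10%N /\
  @flow_cost _ example (witness ord_max) = 0%N.
Proof. by rewrite /flow_cost !big_arcs. Qed.

Theorem mainTheorem4 :
  exists (I : robmcf 'I_2) (s t : dV (graph I))
         (f : 'I_2 -> dA (graph I) -> nat),
    acyclic (graph I) /\ balanced I /\
    unique_source s /\ unique_sink t /\
    (bal I ord0 s < bal I ord_max s)%R /\
    optimal_robust_flow f /\
    (flow_cost (f ord_max) < flow_cost (f ord0))%N /\
    flow_cost (f ord0) = robust_cost f.
Proof.
exists example, vs, vt, witness.
have [cost1 cost2] := witness_costs.
have robust_cost_witness : @robust_cost _ example witness = 10%N.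
  by rewrite -cost1; apply: robust_cost_attained => l; case: (ord2P l) => ->;
    rewrite ?cost2.
split; first exact: example_acyclic.
split; first exact: example_balanced.
split; first exact: example_unique_source.
split; first exact: example_unique_sink.
split; first by [].
split.
  split; first exact: witness_robust.
  by move=> g /robust_cost_lower_bound; rewrite robust_cost_witness.
by rewrite cost1 cost2 robust_cost_witness.
Qed.
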